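(* For all $a,b\in\mathbb{B}^n$, \[ \mathrm{th}\left(\frac{h_{\mathbb{B}^n}(a,b)}{4}\right)\ge\frac{|a-b|}{\sqrt{4-|a+b|^2}}. \] Equality holds if $a=-b$.
   Context: $\mathbb{B}^n$ is the unit ball of $\mathbb{R}^n$. Hilbert metric: for distinct $a,b$ in a bounded convex domain $G\subset\mathbb{R}^n$, let $u,v$ be the intersection points of the line through $a,b$ with $\partial G$, ordered $u,a,b,v$ on the line; $h_G(a,b)=\log\frac{|u-b||a-v|}{|u-a||b-v|}$, and $h_G(a,a)=0$. *)

From HB Require Import structures.
From mathcomp Require Import all_boot all_order all_algebra.
From mathcomp Require Import all_classical all_reals all_analysis.
Set Implicit Arguments. Unset Strict Implicit. Unset Printing Implicit Defensive.
Import Order.TTheory GRing.Theory Num.Theory.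
Local Open Scope classical_set_scope.
Local Open Scope ring_scope.

Section Defs.
Variable R : realType.

Definition enorm (n : nat) (x : 'rV[R]_n) : R :=
  Num.sqrt (\sum_(i < n) x ord0 i ^+ 2).

Definition unit_ball (n : nat) : set 'rV[R]_n := [set x | enorm x < 1].

Definition th (x : R) : R := (expR x - expR (- x)) / (expR x + expR (- x)).

Definition line_params (n : nat) (G : set 'rV[R]_n) (a b : 'rV[R]_n) : set R :=
  [set t | G (a + t *: (b - a))].

(* Hilbert metric of a bounded (open) convex domain G: u, v are the
   intersection points of the line through a, b with the boundary of G,
   ordered u, a, b, v (u = a + t1 (b - a) with t1 = inf, v with t2 = sup). *)
Definition hilbert_metric (n : nat) (G : set 'rV[R]_n) (a b : 'rV[R]_n) : R :=
  if a == b then 0 else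
  let u := a + inf (line_params G a b) *: (b - a) in
  let v := a + sup (line_params G a b) *: (b - a) in
  ln ((enorm (u - b) * enorm (a - v)) / (enorm (u - a) * enorm (b - v))).

End Defs.

(* The line through a and b meets the ball for the parameters t in ]t1, t2[, where
   t1 < 0 < 1 < t2 are the roots of |a + t (b - a)|^2 = 1; hence
   h = ln ((1 - t1) t2 / (-t1 (t2 - 1))) and th (h/4) = (x - y) / (x + y), where x^2
   and y^2 are the numerator and denominator of this cross ratio. Evaluating the
   quadratic at t = 0 and t = 1 expresses |a - b|^2 x y and |a - b|^2 (x^2 + y^2)
   through 1 - |a|^2 and 1 - |b|^2, and the parallelogram law does the same for
   4 - |a + b|^2. The inequality then reduces to the AM-GM inequality for
   1 - |a|^2 and 1 - |b|^2, which is an equality when |a| = |b|. *)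

From HB Require Import structures.
From mathcomp Require Import all_boot all_order all_algebra.
From mathcomp Require Import all_classical all_reals all_analysis.
From mathcomp Require Import ring lra.
Set Implicit Arguments.
Unset Strict Implicit.
Unset Printing Implicit Defensive.
Import Order.TTheory GRing.Theory Num.Theory.
Local Open Scope classical_set_scope.
Local Open Scope ring_scope.

Section RealFacts.
Variable R : realType.
Implicit Types x y e u v al be : R.

Lemma quadratic_opposite_roots s B r : 0 < s -> r < 0 ->
  exists t1 t2 : R, [/\ t1 < 0, 0 < t2 &
    forall t : R, s * t ^+ 2 + B * t + r = s * ((t - t1) * (t - t2))].
Proof.
move=> s_gt0 r_lt0.
have sr_lt0 : s * r < 0 by rewrite pmulr_rlt0.
set d := Num.sqrt (B ^+ 2 - 4 * s * r).
have d2 : d ^+ 2 = B ^+ 2 - 4 * s * r by rewrite sqr_sqrtr // -mulrA; nra.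
have /andP[B_gt_Nd B_lt_d] : - d < B < d.
  rewrite -ltr_norml -ltr_sqr ?nnegrE ?sqrtr_ge0 // real_normK ?num_real // d2.
  by rewrite -mulrA; nra.
have s2_gt0 : 0 < 2 * s by rewrite mulr_gt0.
exists ((- B - d) / (2 * s)), ((- B + d) / (2 * s)); split.
- by rewrite pmulr_llt0 ?invr_gt0 // subr_lt0 ltrNl.
- by rewrite pmulr_lgt0 ?invr_gt0 // addrC subr_gt0.
- move=> t; have -> : r = (B ^+ 2 - d ^+ 2) / (4 * s) by rewrite d2; field; rewrite gt_eqF.
  by field; rewrite gt_eqF.
Qed.

Lemma mulr_subr_lt0 (t t1 t2 : R) : t1 < t2 -> ((t - t1) * (t - t2) < 0) = (t1 < t < t2).
Proof.
move=> lt_t1t2; have [lt_t1t|le_tt1] := ltP t1 t.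
  by rewrite pmulr_rlt0 ?subr_gt0 // subr_lt0.
apply/negbTE; rewrite -leNgt mulr_le0 // subr_le0 //.
exact: ltW (le_lt_trans le_tt1 lt_t1t2).
Qed.

Lemma th_ln_sqr_ratio x y : 0 < x -> 0 < y ->
  th (ln (x ^+ 2 / y ^+ 2) / 4) = (x - y) / (x + y).
Proof.
move=> x_gt0 y_gt0.
set p := expR (ln (x ^+ 2 / y ^+ 2) / 4); have p_gt0 : 0 < p := expR_gt0 _.
have p2 : p ^+ 2 = x / y.
  rewrite /p -expRM_natl -expr_div_n lnXn ?divr_gt0 // mulr2n.
  by rewrite (_ : 2%:R * _ = ln (x / y)) ?lnK ?posrE ?divr_gt0 //; field.
rewrite /th expRN -/p.
have -> : (p - p^-1) / (p + p^-1) = (p ^+ 2 - 1) / (p ^+ 2 + 1).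
  by field; rewrite !gt_eqF // ltr_wpDl ?sqr_ge0.
by rewrite p2; field; rewrite !gt_eqF ?addr_gt0.
Qed.

Lemma amgm_ratio_bound e x y u v : 0 < e -> 0 < y < x ->
  e ^+ 2 * (x ^+ 2 + y ^+ 2) = u ^+ 2 + v ^+ 2 + e ^+ 2 ->
  e ^+ 2 * (x * y) = u * v ->
  e / Num.sqrt (2 * (u ^+ 2 + v ^+ 2) + e ^+ 2) <= (x - y) / (x + y)
  /\ (u = v -> (x - y) / (x + y) = e / Num.sqrt (2 * (u ^+ 2 + v ^+ 2) + e ^+ 2)).
Proof.
move=> e_gt0 /andP[y_gt0 y_lt_x] sum_sqr prod_xy.
set T := 2 * _ + _.
have T_gt0 : 0 < T by rewrite ltr_wpDl ?mulr_ge0 ?addr_ge0 ?sqr_ge0 ?exprn_gt0.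
have sT_gt0 : 0 < Num.sqrt T by rewrite sqrtr_gt0.
have xy_gt0 : 0 < x + y by rewrite addr_gt0 // (lt_trans y_gt0).
(* AM-GM for u^2 and v^2: the defect is a multiple of (u - v)^2. *)
have defect : e ^+ 2 * ((x - y) ^+ 2 * T - e ^+ 2 * (x + y) ^+ 2)
              = 2 * (u ^+ 2 + v ^+ 2 + e ^+ 2) * (u - v) ^+ 2.
  have -> : e ^+ 2 * ((x - y) ^+ 2 * T - e ^+ 2 * (x + y) ^+ 2)
      = 2 * (u ^+ 2 + v ^+ 2) * (e ^+ 2 * (x ^+ 2 + y ^+ 2))
        - 4 * (u ^+ 2 + v ^+ 2 + e ^+ 2) * (e ^+ 2 * (x * y)) by rewrite /T; ring.
  by rewrite sum_sqr prod_xy; ring.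
have ratio_eq : (x - y) / (x + y) - e / Num.sqrt T
   = ((x - y) * Num.sqrt T - e * (x + y)) / ((x + y) * Num.sqrt T).
  by field; rewrite !gt_eqF.
have nneg_l : 0 <= e * (x + y) by rewrite mulr_ge0 ?ltW.
have nneg_r : 0 <= (x - y) * Num.sqrt T by rewrite mulr_ge0 ?subr_ge0 ?ltW.
have sqrE : ((x - y) * Num.sqrt T) ^+ 2 - (e * (x + y)) ^+ 2
            = (x - y) ^+ 2 * T - e ^+ 2 * (x + y) ^+ 2.
  by rewrite !exprMn sqr_sqrtr ?ltW.
split.
  rewrite -subr_ge0 ratio_eq; apply: divr_ge0; last by rewrite mulr_ge0 ?ltW.
  rewrite subr_ge0 -ler_sqr ?nnegrE // -subr_ge0 sqrE.
  rewrite -(pmulr_rge0 _ (exprn_gt0 2 e_gt0)) defect.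
  by rewrite mulr_ge0 ?sqr_ge0 // mulr_ge0 // ?addr_ge0 ?sqr_ge0.
move=> uv; apply/eqP; rewrite -subr_eq0 ratio_eq mulf_eq0; apply/orP; left.
rewrite subr_eq0 -(eqrXn2 (_ : 0 < 2)%N) // -subr_eq0 sqrE.
have := defect; rewrite uv subrr expr0n mulr0 => /eqP.
by rewrite mulf_eq0 sqrf_eq0 gt_eqF.
Qed.

Lemma th_cross_ratio_ge e al be (t1 t2 : R) : 0 < e -> t1 < 0 -> 1 < t2 ->
  e ^+ 2 * (t1 * t2) = - al -> e ^+ 2 * ((1 - t1) * (1 - t2)) = - be ->
  let h := ln ((1 - t1) * t2 / (- t1 * (t2 - 1))) in
  e / Num.sqrt (2 * (al + be) + e ^+ 2) <= th (h / 4)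
  /\ (al = be -> th (h / 4) = e / Num.sqrt (2 * (al + be) + e ^+ 2)).
Proof.
move=> e_gt0 t1_lt0 t2_gt1 at0 at1 h.
have t2_gt0 : 0 < t2 := lt_trans ltr01 t2_gt1.
have N_gt0 : 0 < (1 - t1) * t2 by rewrite mulr_gt0 // subr_gt0 (lt_trans t1_lt0).
have D_gt0 : 0 < - t1 * (t2 - 1) by rewrite mulr_gt0 // ?subr_gt0 ?oppr_gt0.
have al_gt0 : 0 < al.
  by rewrite -[al]opprK -at0 oppr_gt0 pmulr_rlt0 ?exprn_gt0 // nmulr_rlt0.
have be_gt0 : 0 < be.
  rewrite -[be]opprK -at1 oppr_gt0 pmulr_rlt0 ?exprn_gt0 // pmulr_rlt0 ?subr_lt0 //.
  by rewrite subr_gt0 (lt_trans t1_lt0).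
have [u u_ge0 al_sqr] : exists2 u, 0 <= u & al = u ^+ 2.
  by exists (Num.sqrt al); rewrite ?sqrtr_ge0 ?sqr_sqrtr ?ltW.
have [v v_ge0 be_sqr] : exists2 v, 0 <= v & be = v ^+ 2.
  by exists (Num.sqrt be); rewrite ?sqrtr_ge0 ?sqr_sqrtr ?ltW.
rewrite {}al_sqr {}be_sqr in at0 at1 *.
set x := Num.sqrt ((1 - t1) * t2); set y := Num.sqrt (- t1 * (t2 - 1)).
have [x2 y2] : x ^+ 2 = (1 - t1) * t2 /\ y ^+ 2 = - t1 * (t2 - 1).
  by rewrite !sqr_sqrtr ?ltW.
have yx : 0 < y < x by rewrite sqrtr_gt0 D_gt0 ltr_sqrt //=; lra.
have sum_sqr : e ^+ 2 * (x ^+ 2 + y ^+ 2) = u ^+ 2 + v ^+ 2 + e ^+ 2.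
  have -> : e ^+ 2 * (x ^+ 2 + y ^+ 2)
          = e ^+ 2 - e ^+ 2 * (t1 * t2) - e ^+ 2 * ((1 - t1) * (1 - t2)) by rewrite x2 y2; ring.
  by rewrite at0 at1; ring.
have prod_xy : e ^+ 2 * (x * y) = u * v.
  apply/eqP; rewrite -(eqrXn2 (_ : 0 < 2)%N) ?mulr_ge0 ?sqr_ge0 ?sqrtr_ge0 ?(ltW e_gt0) //.
  have -> : (e ^+ 2 * (x * y)) ^+ 2 = e ^+ 2 * (t1 * t2) * (e ^+ 2 * ((1 - t1) * (1 - t2))).
    by rewrite !exprMn x2 y2; ring.
  by rewrite at0 at1 mulrNN exprMn.
have [ge eq] := amgm_ratio_bound e_gt0 yx sum_sqr prod_xy.
rewrite /h -x2 -y2 th_ln_sqr_ratio ?sqrtr_gt0 //; split => // /eqP.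
by rewrite eqrXn2 // => /eqP /eq.
Qed.
End RealFacts.

Section EuclideanNorm.
Variables (R : realType) (n : nat).
Implicit Types (x a b : 'rV[R]_n) (k t : R).

Lemma enorm_ge0 x : 0 <= enorm x.
Proof. exact: sqrtr_ge0. Qed.

Lemma enorm_sqr x : enorm x ^+ 2 = \sum_(i < n) x ord0 i ^+ 2.
Proof. by rewrite sqr_sqrtr // sumr_ge0 // => i _; rewrite sqr_ge0. Qed.

Lemma enorm0 : enorm (0 : 'rV[R]_n) = 0.
Proof. by rewrite /enorm big1 ?sqrtr0 // => i _; rewrite mxE expr0n. Qed.

Lemma enorm_gt0 x : x != 0 -> 0 < enorm x.
Proof.
move=> x_neq0; rewrite lt_def enorm_ge0 andbT; apply: contra x_neq0 => /eqP x0.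
have sum0 : \sum_(i < n) x ord0 i ^+ 2 = 0 by rewrite -enorm_sqr x0 expr0n.
apply/eqP/rowP => i; rewrite !mxE; apply/eqP; rewrite -sqrf_eq0; apply/eqP.
by apply: (psumr_eq0P _ sum0) => // j _; rewrite sqr_ge0.
Qed.

Lemma enormN x : enorm (- x) = enorm x.
Proof. by congr Num.sqrt; apply: eq_bigr => i _; rewrite mxE sqrrN. Qed.

Lemma enormZ k x : enorm (k *: x) = `|k| * enorm x.
Proof.
rewrite /enorm -sqrtr_sqr -sqrtrM ?sqr_ge0 // mulr_sumr.
by congr Num.sqrt; apply: eq_bigr => i _; rewrite mxE exprMn.
Qed.

Lemma enorm_lt1 x : (enorm x < 1) = (enorm x ^+ 2 < 1).
Proof. by rewrite -ltr_sqr ?nnegrE ?enorm_ge0 // expr1n. Qed.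

Lemma enorm_sqr_lerp a b t : enorm (a + t *: (b - a)) ^+ 2
  = (1 - t) * enorm a ^+ 2 + t * enorm b ^+ 2 - t * (1 - t) * enorm (a - b) ^+ 2.
Proof.
rewrite !enorm_sqr !mulr_sumr -big_split -sumrB /=.
by apply: eq_bigr => i _; rewrite !mxE; ring.
Qed.

Lemma enorm_parallelogram a b :
  enorm (a + b) ^+ 2 + enorm (a - b) ^+ 2 = 2 * enorm a ^+ 2 + 2 * enorm b ^+ 2.
Proof.
rewrite !enorm_sqr !mulr_sumr -!big_split /=.
by apply: eq_bigr => i _; rewrite !mxE; ring.
Qed.

End EuclideanNorm.

Section HilbertBall.
Variables (R : realType) (n : nat).
Implicit Types (a b : 'rV[R]_n) (G : set 'rV[R]_n).

Lemma hilbert_metric_chord G a b (t1 t2 : R) : a != b ->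
  line_params G a b = `]t1, t2[%classic -> t1 < 0 -> 1 < t2 ->
  hilbert_metric G a b = ln ((1 - t1) * t2 / (- t1 * (t2 - 1))).
Proof.
move=> neq_ab chord t1_lt0 t2_gt1.
have t2_gt0 : 0 < t2 := lt_trans ltr01 t2_gt1.
have t1_lt_t2 : t1 < t2 := lt_trans t1_lt0 t2_gt0.
rewrite /hilbert_metric (negbTE neq_ab) chord inf_itv ?sup_itv ?bnd_simp //=.
rewrite (_ : a + t1 *: (b - a) - b = (t1 - 1) *: (b - a)); last first.
  by apply/rowP => i; rewrite !mxE; ring.
rewrite (_ : a - (a + t2 *: (b - a)) = (- t2) *: (b - a)); last first.
  by apply/rowP => i; rewrite !mxE; ring.
rewrite (_ : a + t1 *: (b - a) - a = t1 *: (b - a)); last first.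
  by apply/rowP => i; rewrite !mxE; ring.
rewrite (_ : b - (a + t2 *: (b - a)) = (1 - t2) *: (b - a)); last first.
  by apply/rowP => i; rewrite !mxE; ring.
have e_gt0 : 0 < enorm (b - a) by rewrite enorm_gt0 // subr_eq0 eq_sym.
rewrite !enormZ ltr0_norm ?subr_lt0 ?(lt_trans t1_lt0) // normrN gtr0_norm //.
rewrite ltr0_norm // ltr0_norm ?subr_lt0 //.
by congr ln; field; rewrite subr_eq0 gt_eqF // lt_eqF // gt_eqF // subr_eq0 lt_eqF.
Qed.

Lemma line_params_ball a b : unit_ball a -> unit_ball b -> a != b ->
  exists t1 t2 : R, [/\ t1 < 0, 1 < t2,
    line_params (@unit_ball R n) a b = `]t1, t2[%classic,
    enorm (a - b) ^+ 2 * (t1 * t2) = - (1 - enorm a ^+ 2) &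
    enorm (a - b) ^+ 2 * ((1 - t1) * (1 - t2)) = - (1 - enorm b ^+ 2)].
Proof.
rewrite /unit_ball /= => a_in b_in neq_ab.
set e := enorm (a - b).
have e2_gt0 : 0 < e ^+ 2 by rewrite exprn_gt0 // enorm_gt0 // subr_eq0.
have a2_lt1 : enorm a ^+ 2 - 1 < 0 by rewrite subr_lt0 -enorm_lt1.
have [t1 [t2 [t1_lt0 t2_gt0 factor]]] :=
  quadratic_opposite_roots (enorm b ^+ 2 - enorm a ^+ 2 - e ^+ 2) e2_gt0 a2_lt1.
have quad t : enorm (a + t *: (b - a)) ^+ 2 - 1 = e ^+ 2 * ((t - t1) * (t - t2)).
  by rewrite enorm_sqr_lerp -factor /e; ring.
have mem t : (enorm (a + t *: (b - a)) < 1) = (t1 < t < t2).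
  by rewrite enorm_lt1 -subr_lt0 quad pmulr_rlt0 // mulr_subr_lt0 // (lt_trans t1_lt0).
have bE : a + 1 *: (b - a) = b by rewrite scale1r addrC subrK.
exists t1, t2; split => //.
- by have := mem 1; rewrite bE b_in => /esym /andP[].
- by rewrite set_itvoo; apply/funext => t /=; rewrite /line_params /= mem.
- by rewrite opprB; have := quad 0; rewrite scale0r addr0 => ->; ring.
- by rewrite opprB; have := quad 1; rewrite bE => ->; ring.
Qed.

End HilbertBall.

Theorem corollary3p8 (R : realType) (n : nat) (a b : 'rV[R]_n) :
  @unit_ball R n a -> @unit_ball R n b ->
  th (hilbert_metric (@unit_ball R n) a b / 4)
    >= enorm (a - b) / Num.sqrt (4 - enorm (a + b) ^+ 2)
  /\ (a = - b ->
      th (hilbert_metric (@unit_ball R n) a b / 4)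
        = enorm (a - b) / Num.sqrt (4 - enorm (a + b) ^+ 2)).
Proof.
move=> a_in b_in; have [<-|neq_ab] := eqVneq a b.
  by rewrite /hilbert_metric eqxx mul0r subrr enorm0 mul0r /th oppr0 subrr mul0r.
have [t1 [t2 [t1_lt0 t2_gt1 chord at0 at1]]] := line_params_ball a_in b_in neq_ab.
rewrite (hilbert_metric_chord neq_ab chord t1_lt0 t2_gt1).
have -> : 4 - enorm (a + b) ^+ 2
    = 2 * ((1 - enorm a ^+ 2) + (1 - enorm b ^+ 2)) + enorm (a - b) ^+ 2.
  by have := enorm_parallelogram a b; lra.
have e_gt0 : 0 < enorm (a - b) by rewrite enorm_gt0 // subr_eq0.
have [ge eq] := th_cross_ratio_ge e_gt0 t1_lt0 t2_gt1 at0 at1.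
split => // /(congr1 (@enorm R n)); rewrite enormN => ab.
by rewrite eq // ab.
Qed.
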